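(* For every integer $n\ge1$ and every $u\in V$, $\Pr(E_{2u})<\dfrac{9}{2\ln(n+1)}$.
   Context: For an integer $n\ge1$, the $n$-octahedral graph $G'_n=(V,E')$ is the undirected graph with vertex set $V=\{u\in\mathbb{Z}^3:|u_1|+|u_2|+|u_3|=n\}$ and edge set $E'=\{\{v,w\}\subset V: v\neq w,\ |v_i-w_i|\le 1 \text{ for all } i=1,2,3\}$. For $u,v\in V$, $d_{uv}$ denotes the shortest-path distance in $G'_n$, and $Z_u=\left(\sum_{w\in V\setminus\{u\}} d_{uw}^{-2}\right)^{-1}$. The OSW random graph $G_n=(V,E)$ is the directed graph in which, for every $\{u,v\}\in E'$, both $(u,v),(v,u)\in E$, and in addition each vertex $u\in V$, independently of the others, chooses one vertex $v\in V\setminus\{u\}$ with probability $Z_u d_{uv}^{-2}$ and the long-range edge $(u,v)$ is added; $C_{uv}$ denotes the event that $u$ chooses $v$. For an ordered pair $(x,y)$ of distinct vertices, say $(x,y)$ is of type $s$ if $\{x,y\}\in E'$, and of type $w$ if $d_{xy}\ge2$ and $C_{xy}$ occurs. A C3 rooted at $u$ of type $(t_1,t_2,t_3)\in\{s,w\}^3$ is a triple $(u,a,b)$ of pairwise distinct vertices such that $(u,a)$ is of type $t_1$, $(a,b)$ is of type $t_2$ and $(b,u)$ is of type $t_3$. $E_{2u}$ is the event that there exists a C3 rooted at $u$ of type $(s,w,s)$. *)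

From Stdlib Require Import ZArith Reals.
From HB Require Import structures.
From mathcomp Require Import all_boot all_order all_algebra.

Set Implicit Arguments.
Unset Strict Implicit.
Unset Printing Implicit Defensive.

Import Order.TTheory GRing.Theory Num.Theory.

Local Open Scope ring_scope.

(* Points of Z^3 with coordinates in [-n, n], encoded by ordinals < 2n+1. *)
Definition pt (n : nat) := ('I_(n.*2.+1) * 'I_(n.*2.+1) * 'I_(n.*2.+1))%type.

Definition cd (n : nat) (i : 'I_(n.*2.+1)) : int := (nat_of_ord i)%:Z - n%:Z.

Definition onV (n : nat) (p : pt n) : bool :=
  `|cd p.1.1| + `|cd p.1.2| + `|cd p.2| == n%:Z.

Definition V (n : nat) := {p : pt n | onV p}.


Definition c1 n (v : V n) : int := cd (val v).1.1.
Definition c2 n (v : V n) : int := cd (val v).1.2.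
Definition c3 n (v : V n) : int := cd (val v).2.

Definition adj n (v w : V n) : bool :=
  (v != w) && [&& `|c1 v - c1 w| <= 1, `|c2 v - c2 w| <= 1 & `|c3 v - c3 w| <= 1].

Fixpoint reach n (k : nat) (v w : V n) : bool :=
  match k with
  | 0 => v == w
  | k'.+1 => [exists x, adj v x && reach k' x w]
  end.

(* shortest-path distance d_{vw}: least k with a walk of length k
   (G'_n is connected, so this least k is < #|V n|). *)
Definition dist n (v w : V n) : nat :=
  find (fun k => reach k v w) (iota 0 #|{: V n}|).

Definition Zc n (u : V n) : rat :=
  (\sum_(w : V n | w != u) ((dist u w)%:R ^- 2))^-1.

(* probability that u chooses v as long-range contact *)
Definition wgt n (u v : V n) : rat :=
  if v == u then 0 else Zc u / ((dist u v)%:R ^+ 2).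

(* An outcome of the random choices: f u = the vertex chosen by u
   (the event C_{uv} is f u = v).  Its probability is the product
   \prod_x wgt x (f x) (independent choices). *)
Definition outcome_prob n (f : {ffun V n -> V n}) : rat :=
  \prod_(x : V n) wgt x (f x).

Definition E2 n (u : V n) (f : {ffun V n -> V n}) : bool :=
  [exists a : V n, exists b : V n,
    [&& a != u, b != u, a != b,
        adj u a,
        (2 <= dist a b)%N && (f a == b) &
        adj b u]].

Definition PrE2 n (u : V n) : rat :=
  \sum_(f : {ffun V n -> V n} | E2 u f) outcome_prob f.

Definition int2Z (z : int) : Z :=
  match z with
  | Posz k => Z.of_nat k
  | Negz k => Z.opp (Z.of_nat k.+1)
  end.

Definition rat2R (q : rat) : R :=
  Rdiv (IZR (int2Z (numq q))) (IZR (int2Z (denq q))).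

(* By the union bound, Pr(E_2u) is at most the sum of Pr(C_ab) = Z_a d_ab^-2 <= Z_a / 4
   over the ordered pairs (a, b) of neighbours of u that are not adjacent to each other.
   Writing a = u + d and b = u + e with unit steps d, e, the vertex u + d lies on the
   sphere iff d is "tangent" to the sign pattern of u, and a, b are non-adjacent iff d and
   e are opposite in some coordinate; an exhaustive check over the 27 sign patterns leaves
   at most 18 such pairs.  Finally Z_a^-1 > ln (n + 1): if m >= n/3 is the largest
   absolute coordinate of a, moving k + 1 units out of that coordinate into the two
   others (away from 0) gives k + 2 distinct vertices at distance at most k + 1 from a,
   so Z_a^-1 >= sum_(k < m) (k + 2)/(k + 1)^2 > ln (3m + 1).  Altogether
   Pr(E_2u) < 18 / (4 ln (n + 1)). *)

From Stdlib Require Import Rbase Rfunctions Exp_prop Rpower Lra.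
From mathcomp Require Import all_boot all_order all_algebra zify ring Rstruct.

Set Implicit Arguments.
Unset Strict Implicit.
Unset Printing Implicit Defensive.

Import Order.TTheory GRing.Theory Num.Theory.

Local Open Scope ring_scope.

Definition trip := (int * int * int)%type.

Definition norm1 (t : trip) : int := `|t.1.1| + `|t.1.2| + `|t.2|.

Definition near (t t' : trip) : bool :=
  [&& `|t.1.1 - t'.1.1| <= 1, `|t.1.2 - t'.1.2| <= 1 & `|t.2 - t'.2| <= 1].

Definition coords n (v : V n) : trip := (c1 v, c2 v, c3 v).

Definition ord_of_int n (x : int) : 'I_(n.*2.+1) := inord (absz (x + n%:Z)).

(* Off the sphere [norm1 t = n] the point [of_trip a t] is the junk value [a]. *)
Definition of_trip n (a : V n) (t : trip) : V n :=
  insubd a ((ord_of_int n t.1.1, ord_of_int n t.1.2, ord_of_int n t.2) : pt n).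

Lemma cd_inj n : injective (@cd n).
Proof. by move=> i j; rewrite /cd => eq_ij; apply/val_inj => /=; lia. Qed.

Lemma cd_ord_of_int n (x : int) : `|x| <= n%:Z -> cd (ord_of_int n x) = x.
Proof. by move=> le_xn; rewrite /cd /ord_of_int inordK; lia. Qed.

Lemma coords_inj n : injective (@coords n).
Proof.
move=> v w [/cd_inj e1 /cd_inj e2 /cd_inj e3]; apply: val_inj.
by move: e1 e2 e3; case: (val v) (val w) => [[a b] c] [[a' b'] c'] /= -> -> ->.
Qed.

Lemma norm1_coords n (v : V n) : norm1 (coords v) = n%:Z.
Proof. by case: v => p Vp; apply/eqP. Qed.

Lemma coords_of_trip n (a : V n) (t : trip) :
  norm1 t = n%:Z -> coords (of_trip a t) = t.
Proof.
case: t => [[x y] z]; rewrite /norm1 /= => nt.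
have onV_t : onV ((ord_of_int n x, ord_of_int n y, ord_of_int n z) : pt n).
  by rewrite /onV /= !cd_ord_of_int ?nt //; lia.
by rewrite /coords /c1 /c2 /c3 /of_trip insubdK //= !cd_ord_of_int //; lia.
Qed.

Lemma adjE n (v w : V n) :
  adj v w = (coords v != coords w) && near (coords v) (coords w).
Proof. by rewrite /adj (inj_eq (@coords_inj n)). Qed.

Lemma adj_sym n (v w : V n) : adj v w = adj w v.
Proof.
rewrite /adj eq_sym; congr (_ && _).
by rewrite (distrC (c1 v)) (distrC (c2 v)) (distrC (c3 v)).
Qed.

Lemma exists_neq n (u : V n) : (1 <= n)%N -> exists w : V n, w != u.
Proof.
move=> n_gt0; set t := (- c1 u, - c2 u, - c3 u).
have nt : norm1 t = n%:Z by rewrite /norm1 /= !normrN; apply: norm1_coords.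
exists (of_trip u t); apply/eqP => /(congr1 (@coords n)).
rewrite coords_of_trip // => -[e1 e2 e3].
have := norm1_coords u; rewrite /norm1 /=; lia.
Qed.

Lemma reach_rcons n k (v w x : V n) : reach k v w -> adj w x -> reach k.+1 v x.
Proof.
elim: k v => [|k IH] v /=.
  by move=> /eqP -> adj_wx; apply/existsP; exists x; rewrite adj_wx eqxx.
move=> /existsP [y /andP [adj_vy reach_yw]] adj_wx.
by apply/existsP; exists y; rewrite adj_vy; apply: IH reach_yw adj_wx.
Qed.

Lemma dist_le n k (v w : V n) :
  reach k v w -> (k < #|{: V n}|)%N -> (dist v w <= k)%N.
Proof.
move=> reach_k lt_k; rewrite leqNgt; apply/negP => lt_kd.
by have := before_find 0%N lt_kd; rewrite nth_iota // add0n reach_k.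
Qed.

Lemma reach_dist n (v w : V n) :
  (dist v w < #|{: V n}|)%N -> reach (dist v w) v w.
Proof.
rewrite /dist => lt_d.
have has_walk : has (fun k => reach k v w) (iota 0 #|{: V n}|).
  by rewrite has_find size_iota.
by have := nth_find 0%N has_walk; rewrite nth_iota // -(size_iota 0 #|{: V n}|) -has_find.
Qed.

Lemma dist_gt0 n (v w : V n) : v != w -> (0 < dist v w)%N.
Proof.
move=> neq_vw; rewrite lt0n; apply: contra neq_vw => /eqP d0.
have := @reach_dist n v w; rewrite d0 /= => -> //.
by apply/card_gt0P; exists v.
Qed.

Lemma dist_adj n (v w : V n) : adj v w -> (dist v w <= 1)%N.
Proof.
move=> adj_vw; apply: dist_le; first by apply/existsP; exists w; rewrite adj_vw /=.
by apply/card_gt1P; exists v, w; case/andP: adj_vw.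
Qed.

Lemma dist_ge2 n (v w : V n) : v != w -> ~~ adj v w -> (2 <= dist v w)%N.
Proof.
move=> neq_vw not_adj; have d_gt0 := dist_gt0 neq_vw.
case: (ltnP (dist v w) #|{: V n}|) => [d_small|]; last first.
  by apply: leq_trans; apply/card_gt1P; exists v, w.
rewrite ltn_neqAle d_gt0 andbT; apply: contra not_adj => /eqP d1.
have := reach_dist d_small; rewrite -d1 /= => /existsP [x /andP [adj_vx /eqP <-]].
exact: adj_vx.
Qed.

Definition inv_Zc n (u : V n) : rat :=
  \sum_(w : V n | w != u) ((dist u w)%:R ^- 2).

Lemma inv_dist2_gt0 n (u w : V n) : w != u -> 0 < ((dist u w)%:R : rat) ^- 2.
Proof. by move=> neq_wu; rewrite invr_gt0 exprn_gt0 // ltr0n dist_gt0 // eq_sym. Qed.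

Lemma inv_Zc_gt0 n (u : V n) : (1 <= n)%N -> 0 < inv_Zc u.
Proof.
move=> n_gt0; have [w neq_wu] := exists_neq u n_gt0.
rewrite /inv_Zc (bigD1 w) //= ltr_pwDl ?inv_dist2_gt0 //.
by apply: sumr_ge0 => x /andP [neq_xu _]; apply/ltW/inv_dist2_gt0.
Qed.

Lemma Zc_ge0 n (u : V n) : 0 <= Zc u.
Proof.
by rewrite invr_ge0; apply: sumr_ge0 => w neq_wu; apply/ltW/inv_dist2_gt0.
Qed.

Lemma wgt_ge0 n (u v : V n) : 0 <= wgt u v.
Proof. by rewrite /wgt; case: eqP => // _; rewrite divr_ge0 ?Zc_ge0 ?exprn_ge0. Qed.

Lemma outcome_prob_ge0 n (f : {ffun V n -> V n}) : 0 <= outcome_prob f.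
Proof. by apply: prodr_ge0 => x _; apply: wgt_ge0. Qed.

Lemma sum_wgt n (u : V n) : (1 <= n)%N -> \sum_(v : V n) wgt u v = 1.
Proof.
move=> n_gt0; rewrite (bigD1 u) //= /wgt eqxx add0r.
rewrite (eq_bigr (fun v => Zc u * (dist u v)%:R ^- 2)); last by move=> v /negbTE ->.
by rewrite -mulr_sumr mulVf // gt_eqF ?inv_Zc_gt0.
Qed.

Lemma prob_choice n (a b : V n) : (1 <= n)%N ->
  \sum_(f : {ffun V n -> V n} | f a == b) outcome_prob f = wgt a b.
Proof.
move=> n_gt0.
pose G x v : rat := if (x == a) ==> (v == b) then wgt x v else 0.
have -> : \sum_(f : {ffun V n -> V n} | f a == b) outcome_prob f =
            \sum_(f : {ffun V n -> V n}) \prod_x G x (f x).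
  rewrite big_mkcond; apply: eq_bigr => f _.
  have [fab | nfab] := eqVneq (f a) b.
    by apply: eq_bigr => x _; rewrite /G; case: eqP => [->|] //=; rewrite fab eqxx.
  by rewrite (bigD1 a) //= /G eqxx (negbTE nfab) mul0r.
rewrite -bigA_distr_bigA /= (bigD1 a) //= [X in _ * X]big1 ?mulr1 => [|x neq_xa].
  by rewrite /G eqxx /= -big_mkcond big_pred1_eq.
by under eq_bigr => v _ do rewrite /G (negbTE neq_xa) /=; apply: sum_wgt.
Qed.

Definition sws_pair n (u : V n) (p : V n * V n) : bool :=
  [&& adj u p.1, adj p.2 u, p.1 != p.2 & ~~ adj p.1 p.2].

Lemma PrE2_le_sum_wgt n (u : V n) : (1 <= n)%N ->
  PrE2 u <= \sum_(p | sws_pair u p) wgt p.1 p.2.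
Proof.
move=> n_gt0.
under [X in _ <= X]eq_bigr => p _ do rewrite -prob_choice //.
rewrite (exchange_big_dep xpredT) //= [X in _ <= X](bigID (E2 u)) /= ler_wpDr //.
  by rewrite !sumr_ge0 // => f _; rewrite sumr_ge0 // => p _; apply: outcome_prob_ge0.
apply: ler_sum => f /existsP [a /existsP [b]].
case/and3P=> _ _ /and4P [neq_ab adj_ua /andP [d_ab fab] adj_bu].
have sws_ab : sws_pair u (a, b).
  rewrite /sws_pair /= adj_ua adj_bu neq_ab /=.
  by apply: contraTN d_ab => /dist_adj; rewrite leqNgt => /negbTE ->.
rewrite (bigD1 (a, b)) /= ?sws_ab ?fab //= ler_wpDr //.
by rewrite sumr_ge0 // => p _; apply: outcome_prob_ge0.
Qed.

Lemma wgt_le_Zc n (a b : V n) : a != b -> ~~ adj a b -> wgt a b <= Zc a / 4%:R.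
Proof.
move=> neq_ab not_adj; rewrite /wgt eq_sym (negbTE neq_ab).
have d_ge2 := dist_ge2 neq_ab not_adj.
rewrite ler_wpM2l ?Zc_ge0 // lef_pV2 ?posrE ?exprn_gt0 ?ltr0n //; last first.
  exact: leq_trans d_ge2.
by rewrite (_ : 4%:R = 2%:R ^+ 2) ?lerXn2r ?nnegrE ?ler0n ?ler_nat // -natrX.
Qed.

Definition unit_steps : seq int := [:: -1; 0; 1].

Definition steps : seq trip :=
  [seq (xy, z) | xy <- [seq (x, y) | x <- unit_steps, y <- unit_steps], z <- unit_steps].

Definition norm_step (s d : int) : int := if s == 0 then `|d| else s * d.

Definition tangent (s d : trip) : bool :=
  (d != (0, 0, 0)) && (norm_step s.1.1 d.1.1 + norm_step s.1.2 d.1.2 + norm_step s.2 d.2 == 0).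

Definition opposed (d e : trip) : bool :=
  [|| (d.1.1 != 0) && (d.1.1 == - e.1.1), (d.1.2 != 0) && (d.1.2 == - e.1.2)
    | (d.2 != 0) && (d.2 == - e.2)].

(* [sws_steps s] lists the pairs of steps (d, e) of a candidate pair (u + d, u + e)
   when [s] is the sign pattern of [u]; see [normrD_step] for the tangency condition. *)
Definition sws_steps (s : trip) : seq (trip * trip) :=
  [seq p <- [seq (d, e) | d <- steps, e <- steps]
     | [&& tangent s p.1, tangent s p.2 & opposed p.1 p.2]].

Lemma size_sws_steps : all (fun s => size (sws_steps s) <= 18)%N steps.
Proof. by vm_compute. Qed.

Lemma mem_steps (x y z : int) :
  `|x| <= 1 -> `|y| <= 1 -> `|z| <= 1 -> (x, y, z) \in steps.
Proof.
have mem_unit (w : int) : `|w| <= 1 -> w \in unit_steps.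
  by move=> le_w1; have [->|[->|->]] : w = -1 \/ w = 0 \/ w = 1 by lia.
move=> /mem_unit x_in /mem_unit y_in /mem_unit z_in.
by apply: (allpairs_f (fun xy z => (xy, z))); rewrite // (allpairs_f pair).
Qed.

Lemma normrD_step (x d : int) : `|d| <= 1 -> `|x + d| = `|x| + norm_step (sgz x) d.
Proof. by rewrite /norm_step; case: sgzP => [->|x_gt0|x_lt0] /=; lia. Qed.

Definition sgz3 (t : trip) : trip := (sgz t.1.1, sgz t.1.2, sgz t.2).

Definition step n (u a : V n) : trip := (c1 a - c1 u, c2 a - c2 u, c3 a - c3 u).

Lemma step_inj n (u : V n) : injective (step u).
Proof. by move=> a b [e1 e2 e3]; apply: coords_inj; rewrite /coords; congr (_, _, _); lia. Qed.

Lemma step_in_steps n (u a : V n) : adj u a -> step u a \in steps.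
Proof. by case/andP=> _ /and3P [? ? ?]; apply: mem_steps; lia. Qed.

Lemma tangent_step n (u a : V n) : adj u a -> tangent (sgz3 (coords u)) (step u a).
Proof.
case/andP=> neq_ua /and3P [le1 le2 le3]; apply/andP; split.
  apply: contra neq_ua => /eqP [e1 e2 e3]; apply/eqP/coords_inj.
  by rewrite /coords; congr (_, _, _); lia.
have := norm1_coords a; have := norm1_coords u; rewrite /norm1 /=.
have := normrD_step (c1 u) (d := c1 a - c1 u) ltac:(by rewrite distrC).
have := normrD_step (c2 u) (d := c2 a - c2 u) ltac:(by rewrite distrC).
have := normrD_step (c3 u) (d := c3 a - c3 u) ltac:(by rewrite distrC).
by move=> *; apply/eqP; lia.
Qed.

Lemma opposed_step n (u a b : V n) :
  sws_pair u (a, b) -> opposed (step u a) (step u b).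
Proof.
rewrite /sws_pair /=; case/and4P=> /andP [_ /and3P [? ? ?]] /andP [_ /and3P [? ? ?]] neq_ab.
rewrite /adj neq_ab /= /opposed /step /=.
by case/nandP=> [?|/nandP [?|?]]; apply/or3P; [apply: Or31 | apply: Or32 | apply: Or33];
  apply/andP; split; lia.
Qed.

Lemma card_sws_pair n (u : V n) : (#|sws_pair u| <= 18)%N.
Proof.
pose steps2 p := (step u p.1, step u p.2).
have steps2_inj : injective steps2.
  move=> [a b] [a' b'] eq_ab; congr (_, _); apply: (@step_inj n u).
    exact: (f_equal fst eq_ab).
  exact: (f_equal snd eq_ab).
have sub_sws : {subset map steps2 (enum (sws_pair u)) <= sws_steps (sgz3 (coords u))}.
  move=> x /mapP [[a b]]; rewrite mem_enum => sws_ab ->.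
  have [adj_ua adj_bu _ _] := and4P sws_ab; rewrite adj_sym in adj_bu.
  rewrite mem_filter; apply/andP; split; first by rewrite /= !tangent_step ?opposed_step.
  exact: allpairs_f (step_in_steps adj_ua) (step_in_steps adj_bu).
rewrite cardE -(size_map steps2); apply: leq_trans (uniq_leq_size _ sub_sws) _.
  by rewrite map_inj_uniq ?enum_uniq.
by have /allP := size_sws_steps; apply; apply: mem_steps; case: sgzP.
Qed.

Definition cone_sum (m : nat) : rat := \sum_(k < m) (k.+2)%:R / (k.+1)%:R ^+ 2.

Lemma ler_sum_inj (R : numDomainType) (I J : finType) (P : pred I) (Q : pred J)
    (h : I -> J) (F : J -> R) :
  {in P &, injective h} -> (forall i, P i -> Q (h i)) -> (forall j, Q j -> 0 <= F j) ->
  \sum_(i | P i) F (h i) <= \sum_(j | Q j) F j.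
Proof.
move=> h_inj PQ F_ge0; rewrite -(big_imset _ h_inj) /=.
rewrite [X in _ <= X](bigID [in h @: P]) /= ler_wpDr //.
  by rewrite sumr_ge0 // => j /andP [/F_ge0].
rewrite le_eqVlt; apply/orP; left; apply/eqP/eq_bigl => j.
apply/idP/andP => [/[dup] /imsetP [i Pi ->] ->|[] //].
by split => //; apply: PQ.
Qed.

Lemma card_ord_le m k : (k < m)%N -> #|[pred j : 'I_m.+1 | (j <= k.+1)%N]| = k.+2.
Proof.
move=> lt_km; rewrite -sum1_card.
rewrite (eq_bigl (fun j : 'I_m.+1 => true && (j < k.+2)%N)) //.
by rewrite -(@big_ord_widen_cond _ _ _ k.+2 m.+1 xpredT (fun=> 1%N) lt_km) sum1_card card_ord.
Qed.

(* [h k j], for [j <= k + 1], are the [k + 2] vertices of level [k + 1]. *)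
Lemma cone_sum_le_inv_Zc_levels n (a : V n) m (h : 'I_m -> 'I_m.+1 -> V n) :
  (forall (k : 'I_m) (j : 'I_m.+1), (j <= k.+1)%N -> h k j != a) ->
  (forall (k : 'I_m) (j : 'I_m.+1), (j <= k.+1)%N -> (dist a (h k j) <= k.+1)%N) ->
  (forall (k k' : 'I_m) (j j' : 'I_m.+1), (j <= k.+1)%N -> (j' <= k'.+1)%N ->
     h k j = h k' j' -> k = k' /\ j = j') ->
  cone_sum m <= inv_Zc a.
Proof.
move=> h_neq h_dist h_inj; pose P (x : 'I_m * 'I_m.+1) := (x.2 <= x.1.+1)%N.
have -> : cone_sum m = \sum_(x | P x) ((x.1.+1)%:R : rat) ^- 2.
  rewrite -(pair_big_dep xpredT (fun (k : 'I_m) (j : 'I_m.+1) => (j <= k.+1)%N)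
                                (fun (k : 'I_m) _ => ((k.+1)%:R : rat) ^- 2)) /=.
  by apply: eq_bigr => k _; rewrite sumr_const card_ord_le // mulr_natl.
apply: (@le_trans _ _ (\sum_(x | P x) ((dist a (h x.1 x.2))%:R : rat) ^- 2)).
  apply: ler_sum => x Px; have d_gt0 : (0 < dist a (h x.1 x.2))%N.
    by apply: dist_gt0; rewrite eq_sym h_neq.
  by rewrite lef_pV2 ?posrE ?exprn_gt0 ?ltr0n // lerXn2r ?nnegrE ?ler0n // ler_nat h_dist.
apply: (ler_sum_inj (F := fun w => ((dist a w)%:R : rat) ^- 2)) => [x y Px Py|x Px|w _].
- by case/h_inj => //; case: x y {Px Py} => [? ?] [? ?] /= -> ->.
- by rewrite h_neq.
- by rewrite invr_ge0 exprn_ge0.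
Qed.

Lemma cone_sum_le_inv_Zc_grid n (a : V n) m (t : nat -> nat -> trip) :
  t 0 0 = coords a ->
  (forall i j, (i + j <= m)%N -> norm1 (t i j) = n%:Z) ->
  (forall i j, t i j != t i j.+1 /\ near (t i j) (t i j.+1)) ->
  (forall i, t i 0 != t i.+1 0 /\ near (t i 0) (t i.+1 0)) ->
  (forall i j i' j', t i j = t i' j' -> i = i' /\ j = j') ->
  cone_sum m <= inv_Zc a.
Proof.
move=> t00 t_norm t_step_j t_step_i t_inj; pose g i j := of_trip a (t i j).
have coords_g i j : (i + j <= m)%N -> coords (g i j) = t i j.
  by move=> le_ijm; apply/coords_of_trip/t_norm.
have g_inj i j i' j' : (i + j <= m)%N -> (i' + j' <= m)%N -> g i j = g i' j' ->
    i = i' /\ j = j'.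
  by move=> le_ijm le_ijm' /(congr1 (@coords n)); rewrite !coords_g // => /t_inj.
have g00 : g 0 0 = a by apply: coords_inj; rewrite coords_g.
have reach_g i j : (i + j <= m)%N -> reach (i + j) a (g i j).
  elim: j => [|j IHj] le_ijm.
    rewrite addn0 in le_ijm *; elim: i le_ijm => [|i IHi] le_im; first by rewrite g00 /=.
    apply: reach_rcons (IHi (ltnW le_im)) _.
    by rewrite adjE !coords_g ?addn0 ?(ltnW le_im) //; apply/andP/t_step_i.
  rewrite addnS in le_ijm *; apply: reach_rcons (IHj (ltnW le_ijm)) _.
  by rewrite adjE !coords_g ?addnS ?(ltnW le_ijm) //; apply/andP/t_step_j.
have card_V : (m < #|{: V n}|)%N.
  have g0_inj : injective (fun i : 'I_m.+1 => g i 0).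
    by move=> i i' /g_inj; rewrite !addn0 => /(_ (ltn_ord i) (ltn_ord i')) [/val_inj].
  by have := leq_card _ g0_inj; rewrite card_ord.
apply: (cone_sum_le_inv_Zc_levels (h := fun k j => g j (k.+1 - j)%N))
  => [k j|k j|k k' j j'] le_jk.
- apply/eqP; rewrite -g00 => /g_inj.
  by rewrite subnKC // addn0 => /(_ (ltn_ord k) isT) [-> /eqP]; rewrite subn0.
- apply: dist_le; last exact: leq_ltn_trans (ltn_ord k) card_V.
  by rewrite -{1}(subnKC le_jk); apply: reach_g; rewrite subnKC.
- move=> le_jk' /g_inj; rewrite !subnKC // => /(_ (ltn_ord k) (ltn_ord k')) [e_j e_k].
  by split; apply: val_inj => //=; move: e_k; rewrite e_j; lia.
Qed.

(* Unlike [sgz], [sgn1 0 = 1]: the cone may leave a zero coordinate in either direction. *)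
Definition sgn1 (x : int) : int := if x < 0 then -1 else 1.

Definition cone (y : trip) (i j : nat) : trip :=
  (y.1.1 - sgn1 y.1.1 * (i + j)%:Z, y.1.2 + sgn1 y.1.2 * i%:Z, y.2 + sgn1 y.2 * j%:Z).

Lemma cone00 y : cone y 0 0 = y.
Proof. by case: y => [[y1 y2] y3]; rewrite /cone /=; congr (_, _, _); lia. Qed.

Lemma norm1_cone y i j : (i + j <= absz y.1.1)%N -> norm1 (cone y i j) = norm1 y.
Proof.
case: y => [[y1 y2] y3] /=; rewrite /norm1 /cone /sgn1 /=.
by case: (ltrP y1 0); case: (ltrP y2 0); case: (ltrP y3 0); lia.
Qed.

Lemma cone_step_j y i j : cone y i j != cone y i j.+1 /\ near (cone y i j) (cone y i j.+1).
Proof.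
case: y => [[y1 y2] y3]; rewrite /near /cone /sgn1 /=; split.
  by apply/negP => /eqP/(congr1 snd) /=; case: (ltrP y3 0) => _; lia.
by case: (ltrP y1 0); case: (ltrP y2 0); case: (ltrP y3 0) => *; apply/and3P; split; lia.
Qed.

Lemma cone_step_i y i : cone y i 0 != cone y i.+1 0 /\ near (cone y i 0) (cone y i.+1 0).
Proof.
case: y => [[y1 y2] y3]; rewrite /near /cone /sgn1 /=; split.
  by apply/negP => /eqP/(congr1 (fun t : trip => t.1.2)) /=; case: (ltrP y2 0) => _; lia.
by case: (ltrP y1 0); case: (ltrP y2 0); case: (ltrP y3 0) => *; apply/and3P; split; lia.
Qed.

Lemma cone_inj y i j i' j' : cone y i j = cone y i' j' -> i = i' /\ j = j'.
Proof.
case: y => [[y1 y2] y3]; rewrite /cone /sgn1 /= => -[_ e2 e3].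
by move: e2 e3; case: (ltrP y2 0); case: (ltrP y3 0) => *; split; lia.
Qed.

Definition trip_sym (P : trip -> trip) : Prop :=
  [/\ forall t, norm1 (P t) = norm1 t, forall t t', near t t' -> near (P t) (P t')
    & injective P].

Lemma cone_sum_le_inv_Zc_sym n (a : V n) (P : trip -> trip) (y : trip) :
  trip_sym P -> P y = coords a -> cone_sum (absz y.1.1) <= inv_Zc a.
Proof.
move=> [P_norm P_near P_inj] Py.
apply: (cone_sum_le_inv_Zc_grid (t := fun i j => P (cone y i j)))
  => [|i j le_ij|i j|i|i j i' j'].
- by rewrite cone00.
- by rewrite P_norm norm1_cone // -P_norm Py norm1_coords.
- by case: (cone_step_j y i j) => ne nr; rewrite (inj_eq P_inj) ne P_near.
- by case: (cone_step_i y i) => ne nr; rewrite (inj_eq P_inj) ne P_near.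
- by move/P_inj/cone_inj.
Qed.

Definition swap12 (t : trip) : trip := (t.1.2, t.1.1, t.2).

Definition rot3 (t : trip) : trip := (t.1.2, t.2, t.1.1).

Lemma trip_sym_id : trip_sym id.
Proof. by split. Qed.

Lemma trip_sym_swap12 : trip_sym swap12.
Proof.
split=> [[[x y] z]|[[x y] z] [[x' y'] z']|[[x y] z] [[x' y'] z'] [-> -> ->]] //.
- by rewrite /norm1 /=; lia.
- by rewrite /near /= => /and3P [-> -> ->].
Qed.

Lemma trip_sym_rot3 : trip_sym rot3.
Proof.
split=> [[[x y] z]|[[x y] z] [[x' y'] z']|[[x y] z] [[x' y'] z'] [-> -> ->]] //.
- by rewrite /norm1 /=; lia.
- by rewrite /near /= => /and3P [-> -> ->].
Qed.

Lemma exists_cone_sum_le_inv_Zc n (a : V n) : (1 <= n)%N ->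
  exists m, [/\ (1 <= m)%N, (n <= 3 * m)%N & cone_sum m <= inv_Zc a].
Proof.
move=> n_gt0; have := norm1_coords a; rewrite /norm1 /= => norm_a.
have from_sym P y : trip_sym P -> P y = coords a -> (n <= 3 * absz y.1.1)%N ->
    exists m, [/\ (1 <= m)%N, (n <= 3 * m)%N & cone_sum m <= inv_Zc a].
  move=> symP Py le_n; exists (absz y.1.1); split => //; first by lia.
  exact: cone_sum_le_inv_Zc_sym symP Py.
have [[? ?]|[[? ?]|[? ?]]] :
    [/\ `|c2 a| <= `|c1 a| & `|c3 a| <= `|c1 a|] \/
    [/\ `|c1 a| <= `|c2 a| & `|c3 a| <= `|c2 a|] \/
    [/\ `|c1 a| <= `|c3 a| & `|c2 a| <= `|c3 a|] by lia.
- by apply: (from_sym _ (coords a) trip_sym_id) => //=; lia.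
- by apply: (from_sym _ (c2 a, c1 a, c3 a) trip_sym_swap12) => //=; lia.
- by apply: (from_sym _ (c3 a, c1 a, c2 a) trip_sym_rot3) => //=; lia.
Qed.

Lemma ratr_cone_sumS m :
  ratr (cone_sum m.+1) =
  Rplus (ratr (cone_sum m)) (Rdiv (INR (m + 2)) (Rmult (INR (m + 1)) (INR (m + 1)))) :> R.
Proof.
rewrite /cone_sum big_ord_recr rmorphD /= RplusE RdivE RmultE !INRE fmorph_div /=.
by rewrite rmorphXn !rmorph_nat expr2 !addn2 !addn1.
Qed.

Section LnBound.

Local Open Scope R_scope.

Lemma ln_1p_lt x : 0 < x -> ln (1 + x) < x.
Proof.
move=> x_gt0; rewrite -{2}(ln_exp x); apply: ln_increasing; first lra.
by apply: exp_ineq1; lra.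
Qed.

Lemma ln4_lt2 : ln 4 < 2.
Proof.
rewrite -(ln_exp 2); apply: ln_increasing; first lra.
have e_gt2 := exp_ineq1 1 ltac:(lra).
by replace 2 with (1 + 1) by lra; rewrite exp_plus; nra.
Qed.

(* ln (3 (k + 1) + 1) - ln (3 k + 1) = ln (1 + 3 / (3 k + 1)) < 3 / (3 k + 1), which is at
   most the new term (k + 2) / (k + 1)^2 of [cone_sum]. *)
Lemma ln_lt_cone_sum m : (1 <= m)%N -> ln (3 * INR m + 1) < ratr (cone_sum m).
Proof.
elim: m => [//|[_ _|m IH _]].
  have cone_sum0 : ratr (cone_sum 0) = 0 by rewrite /cone_sum big_ord0 rmorph0.
  rewrite ratr_cone_sumS cone_sum0 /=.
  rewrite !Rmult_1_r Rdiv_1_r; replace (3 + 1) with 4 by lra.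
  by have := ln4_lt2; lra.
have k_ge1 : 1 <= INR m.+1 by rewrite S_INR; have := pos_INR m; lra.
have IH' := IH isT; rewrite ratr_cone_sumS !plus_INR.
change (INR 2) with (1 + 1); change (INR 1) with 1.
set k := INR m.+1 in k_ge1 IH' *.
have e : 3 * (k + 1) + 1 = (3 * k + 1) * (1 + 3 / (3 * k + 1)).
  by field_simplify_eq; lra.
have step_gt0 : 0 < 3 / (3 * k + 1) by apply: Rdiv_lt_0_compat; lra.
rewrite e ln_mult; [|lra|lra].
have := ln_1p_lt step_gt0.
have : 3 / (3 * k + 1) <= (k + 2) / ((k + 1) * (k + 1)).
  apply: (Rmult_le_reg_r ((3 * k + 1) * ((k + 1) * (k + 1)))); first nra.
  by field_simplify; nra.
lra.
Qed.

Lemma ln_succ_gt0 n : (1 <= n)%N -> 0 < ln (INR n + 1).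
Proof.
move=> n_gt0; rewrite -ln_1; apply: ln_increasing; first lra.
by have := le_INR 1 n (ssrnat.leP n_gt0); rewrite /=; lra.
Qed.

Lemma ln_lt_inv_Zc n (a : V n) : (1 <= n)%N -> ln (INR n + 1) < ratr (inv_Zc a).
Proof.
move=> n_gt0; have [m [m_gt0 le_n3m le_inv]] := exists_cone_sum_le_inv_Zc a n_gt0.
have le_cone : ratr (cone_sum m) <= ratr (inv_Zc a) by apply/RleP; rewrite ler_rat.
have le_ln : ln (INR n + 1) <= ln (3 * INR m + 1).
  have le_nm : INR n <= 3 * INR m.
    by rewrite -(INR_IZR_INZ 3) -mult_INR; apply/le_INR/ssrnat.leP.
  have n_pos := pos_INR n.
  case: (Rle_lt_or_eq_dec _ _ le_nm) => [lt_nm|->]; last exact: Rle_refl.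
  by apply/Rlt_le/ln_increasing; lra.
have := ln_lt_cone_sum m_gt0; lra.
Qed.

End LnBound.

Lemma IZR_int2Z (z : int) : IZR (int2Z z) = z%:~R.
Proof.
case: z => k; first by rewrite /int2Z -INR_IZR_INZ INRE.
by rewrite /int2Z opp_IZR -INR_IZR_INZ INRE NegzE rmorphN.
Qed.

Lemma rat2R_ratr q : rat2R q = ratr q.
Proof. by rewrite /rat2R !IZR_int2Z RdivE. Qed.

Lemma sumr_lt_mulrn (R : numDomainType) (I : finType) (P : pred I) (F : I -> R) c k :
  0 < c -> (0 < k)%N -> (#|P| <= k)%N -> (forall i, P i -> F i < c) ->
  \sum_(i | P i) F i < c *+ k.
Proof.
move=> c_gt0 k_gt0 le_Pk F_lt; have [i Pi|P0] := pickP P; last first.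
  by rewrite big_pred0 // pmulrn_rgt0.
apply: (lt_le_trans (ltr_sum _ F_lt)); first by apply/hasP; exists i; rewrite ?mem_index_enum.
by rewrite sumr_const ler_pMn2l.
Qed.


Lemma ratr_Zc_lt n (a : V n) : (1 <= n)%N ->
  ratr (Zc a) < (ln (Rplus (INR n) (INR 1)))^-1 :> R.
Proof.
move=> n_gt0; have /RltP L_gt0 := ln_succ_gt0 n_gt0; have /RltP lt_L := ln_lt_inv_Zc a n_gt0.
by rewrite fmorphV ltf_pV2 ?posrE // (lt_trans L_gt0).
Qed.

Theorem lemma6 (n : nat) (hn : (1 <= n)%N) (u : V n) :
  Rlt (rat2R (PrE2 u)) (Rdiv (INR 9) (Rmult (INR 2) (ln (Rplus (INR n) (INR 1))))).
Proof.
set L := ln (Rplus (INR n) (INR 1)).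
have L_gt0 : 0 < L by apply/RltP/ln_succ_gt0.
apply/RltP; rewrite rat2R_ratr RdivE RmultE !INRE.
have -> : 9%:R / (2%:R * L) = (L^-1 / 4%:R) *+ 18 by rewrite -mulr_natr; field; rewrite gt_eqF.
pose F (p : V n * V n) : R := ratr (wgt p.1 p.2).
apply: le_lt_trans (sumr_lt_mulrn (F := F) _ _ (card_sws_pair u) _) => //.
- by rewrite -rmorph_sum ler_rat PrE2_le_sum_wgt.
- by rewrite divr_gt0 ?invr_gt0.
move=> [a b] /and4P [_ _ neq_ab not_adj]; rewrite /=.
apply: le_lt_trans (_ : ratr (Zc a) / 4%:R < _).
  by rewrite /F -(rmorph_nat (ratr : rat -> R)) -fmorph_div ler_rat wgt_le_Zc.
by rewrite ltr_pM2r ?invr_gt0 ?ratr_Zc_lt.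
Qed.
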